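(* Let $N=2^{d_1+1}$ and, for an operator $\Phi$ on $\mathbb C^N$, let $\mathcal T(\Phi)=\frac{1}{N!}\sum_{\sigma\in\mathrm{Sym}(N)}U_\sigma\Phi U_\sigma^\dagger$, where $U_\sigma$ is the permutation matrix of $\sigma$. In the setting of the context: (i) Averaging over a uniformly random key $k\in\{0,1\}^{2d_1}$ and a uniformly random permutation $\sigma$, the original ciphertext has expectation $\mathbb E_{\sigma,k}[M_f^{(0)}]=\frac{1}{2^{d_1+1}}I_{2^{d_1+1}}$. (ii) Let $\overline{M}_a^{(1)}$ denote $M_a^{(1)}$ with $M_o'$ replaced by $\mathbb E_k[M_o']=2^{-d_1}I_{2^{d_1}}$ and $M_c''$ replaced by $\mathbb E_{k'}[M_c'']=2^{-d_2}VV^\dagger$ (keys uniform). Then \[ \mathcal T\big(\overline{M}_a^{(1)}\big)=\frac{2^{d_1+1}-1-\frac2\eta}{2^{d_1+1}(2^{d_1+1}-1)}\,I+\frac{2/\eta}{2^{d_1+1}(2^{d_1+1}-1)}\,J, \] where $J$ is the $N\times N$ all-ones matrix. (iii) The trace distance between the averaged states in (ii) and (i) equals $\frac{1}{\eta\,2^{d_1}}$, which is less than $\varepsilon$. (iv) For any two input pairs $(M_o,M_c)$ and $(\tilde M_o,\tilde M_c)$ of the same dimensions, the averaged anamorphic states obtained as in (ii) (all keys drawn uniformly from the same key sets) have trace distance $0$.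
   Context: Let $d_1\ge d_2\ge1$, $\mathcal H_M=(\mathbb C^2)^{\otimes d_1}$, $\mathcal H_{M_c}=(\mathbb C^2)^{\otimes d_2}$, and $U_k=\bigotimes_{j}X^{k_{2j-1}}Z^{k_{2j}}$ (Pauli $X,Z$) for bit strings $k$. $M_o$ is a strictly positive definite density matrix on $\mathcal H_M$, $M_c$ a density matrix on $\mathcal H_{M_c}$; $M_o'=U_kM_oU_k^\dagger$ with $k\in\{0,1\}^{2d_1}$, $M_c'=U_{k'}M_cU_{k'}^\dagger$ with $k'\in\{0,1\}^{2d_2}$, $V|\psi\rangle=|\psi\rangle\otimes|0\rangle^{\otimes(d_1-d_2)}$, $M_c''=VM_c'V^\dagger$. For $\eta\in\mathbb Z^+$, on $\mathbb C^2\otimes\mathcal H_M$ (blocks w.r.t. the first qubit), $M_a^{(0)}=\begin{pmatrix}\frac12M_o'&0\\0&\frac12M_o'\end{pmatrix}$, $M_a^{(1)}=\begin{pmatrix}\frac12M_o'&\frac1\eta M_c''\\\frac1\eta(M_c'')^\dagger&\frac12M_o'\end{pmatrix}$, and $M_f^{(b)}=U_\sigma M_a^{(b)}U_\sigma^\dagger$ for a permutation $\sigma\in\mathrm{Sym}(2^{d_1+1})$. Standing assumption of the construction: for a given threshold $\varepsilon>0$ (written $\mathsf{negl}(\lambda)$), $\eta$ satisfies $1/\eta<\varepsilon$ and $\frac1{\eta^2}\|M_c''(M_o')^{-1}M_c''\|\le\frac14\lambda_{\min}(M_o')$. Trace distance $D(\rho,\tau)=\frac12\|\rho-\tau\|_1$.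 *)

(* complex matrices over an arbitrary numClosedFieldType C
   (e.g. the complex numbers R[i]). *)
From HB Require Import structures.
From mathcomp Require Import all_boot all_order all_fingroup all_algebra.
Set Implicit Arguments. Unset Strict Implicit. Unset Printing Implicit Defensive.
Import Order.TTheory GRing.Theory Num.Theory.
Local Open Scope ring_scope.

Section Defs.
Variable C : numClosedFieldType.

Definition adj m n (A : 'M[C]_(m, n)) : 'M[C]_(n, m) :=
  map_mx Num.conj (A^T).

(* eigenvalues (with algebraic multiplicity) = roots of the characteristic
   polynomial, which splits since C is algebraically closed *)
Definition eigs n (A : 'M[C]_n) : seq C :=
  sval (closed_field_poly_normal (char_poly A)).

(* trace norm ||A||_1 = tr sqrt(A^dagger A) = sum of singular values *)
Definition trnorm n (A : 'M[C]_n) : C :=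
  \sum_(z <- eigs (adj A *m A)) sqrtC z.

Definition tdist n (A B : 'M[C]_n) : C := 2^-1 * trnorm (A - B).

Definition opnorm n (A : 'M[C]_n) : C :=
  \big[Num.max/0]_(z <- eigs (adj A *m A)) sqrtC z.

(* smallest eigenvalue (the eigenvalues of a Hermitian matrix are real) *)
Definition lambda_min n (A : 'M[C]_n) : C :=
  \big[Num.min/head 0 (eigs A)]_(z <- eigs A) z.

Definition hermitian n (A : 'M[C]_n) : Prop := adj A = A.
Definition psd n (A : 'M[C]_n) : Prop :=
  forall v : 'cV[C]_n, 0 <= (adj v *m A *m v) 0 0.
Definition posdef n (A : 'M[C]_n) : Prop :=
  forall v : 'cV[C]_n, v != 0 -> 0 < (adj v *m A *m v) 0 0.
Definition density n (A : 'M[C]_n) : Prop :=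
  [/\ hermitian A, psd A & \tr A = 1].

Definition pauliX : 'M[C]_2 := \matrix_(i, j) (i != j)%:R.
Definition pauliZ : 'M[C]_2 := \matrix_(i, j) ((i == j)%:R * (-1) ^+ i).
Definition pauliXZ (a b : bool) : 'M[C]_2 :=
  (if a then pauliX else 1%:M) *m (if b then pauliZ else 1%:M).

(* Qubit j (j = 0 is the first qubit) of a basis index r of (C^2)^{(x)d};
   convention: the first qubit is the most significant bit. *)
Definition qbit d (r : 'I_(2 ^ d)) (j : 'I_d) : 'I_2 :=
  inord ((r %/ 2 ^ (d.-1 - j)) %% 2).

Definition tens d (A : 'I_d -> 'M[C]_2) : 'M[C]_(2 ^ d) :=
  \matrix_(r, c) \prod_(j < d) A j (qbit r j) (qbit c j).

(* keys k in {0,1}^{2d}: the pair (k_{2j-1}, k_{2j}) for qubit j *)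
Definition key d := {ffun 'I_d -> bool * bool}.

Definition Uk d (k : key d) : 'M[C]_(2 ^ d) :=
  tens (fun j => pauliXZ (k j).1 (k j).2).

(* V |psi> = |psi> (x) |0>^{(d1-d2)} *)
Definition Vmx d1 d2 : 'M[C]_(2 ^ d1, 2 ^ d2) :=
  \matrix_(i, j) ((i : nat) == j * 2 ^ (d1 - d2))%N%:R.

Definition conjU d (k : key d) (M : 'M[C]_(2 ^ d)) : 'M[C]_(2 ^ d) :=
  Uk k *m M *m adj (Uk k).

Definition Mcpp d1 d2 (k' : key d2) (Mc : 'M[C]_(2 ^ d2)) : 'M[C]_(2 ^ d1) :=
  Vmx d1 d2 *m conjU k' Mc *m adj (Vmx d1 d2).

Lemma expS_add d : (2 ^ d + 2 ^ d = 2 ^ d.+1)%N.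
Proof. by rewrite expnS mul2n addnn. Qed.

(* block matrix w.r.t. the first qubit on C^2 (x) H_M *)
Definition blk d (A B D E : 'M[C]_(2 ^ d)) : 'M[C]_(2 ^ d.+1) :=
  castmx (expS_add d, expS_add d) (block_mx A B D E).

Definition Ma0 d (Mo' : 'M[C]_(2 ^ d)) : 'M[C]_(2 ^ d.+1) :=
  blk (2^-1 *: Mo') 0 0 (2^-1 *: Mo').

Definition Ma1 d (eta : nat) (Mo' Mc'' : 'M[C]_(2 ^ d)) : 'M[C]_(2 ^ d.+1) :=
  blk (2^-1 *: Mo') ((eta%:R)^-1 *: Mc'') ((eta%:R)^-1 *: adj Mc'') (2^-1 *: Mo').

Definition permconj N (s : 'S_N) (Phi : 'M[C]_N) : 'M[C]_N :=
  perm_mx s *m Phi *m adj (perm_mx s).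

Definition twirl N (Phi : 'M[C]_N) : 'M[C]_N :=
  (N`!%:R)^-1 *: \sum_(s : 'S_N) permconj s Phi.

Definition EMf0 d1 (Mo : 'M[C]_(2 ^ d1)) : 'M[C]_(2 ^ d1.+1) :=
  (((2 ^ d1.+1)`! * 2 ^ (2 * d1))%:R)^-1 *:
    \sum_(s : 'S_(2 ^ d1.+1)) \sum_(k : key d1) permconj s (Ma0 (conjU k Mo)).

Definition EMo d1 (Mo : 'M[C]_(2 ^ d1)) : 'M[C]_(2 ^ d1) :=
  ((2 ^ (2 * d1))%:R)^-1 *: \sum_(k : key d1) conjU k Mo.
Definition EMc d1 d2 (Mc : 'M[C]_(2 ^ d2)) : 'M[C]_(2 ^ d1) :=
  ((2 ^ (2 * d2))%:R)^-1 *: \sum_(k' : key d2) Mcpp d1 k' Mc.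

Definition Mbar1 d1 d2 (eta : nat) (Mo : 'M[C]_(2 ^ d1)) (Mc : 'M[C]_(2 ^ d2))
  : 'M[C]_(2 ^ d1.+1) := Ma1 eta (EMo Mo) (EMc d1 Mc).

End Defs.

From HB Require Import structures.
From mathcomp Require Import all_boot all_order all_fingroup all_algebra.
From mathcomp Require Import ring zify.
Set Implicit Arguments. Unset Strict Implicit. Unset Printing Implicit Defensive.
Import Order.TTheory GRing.Theory Num.Theory.
Local Open Scope ring_scope.

(* Averaging U_k M U_k^dagger over all Pauli keys k is the completely depolarising
   channel: it sends M to (tr M / 2^d) I.  Hence E_k[M_o'] and E_k'[M_c''] are
   2^-d1 I and 2^-d2 V V^dagger, and the averaged states depend on the inputs only
   through their traces, which gives (iv).  A matrix invariant under simultaneous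
   permutations of rows and columns has the form a I + b J, so the permutation twirl
   is determined by the trace and the sum of all entries, both of which it preserves;
   this gives (i) and (ii).  The difference of the two averaged states in (iii) is
   y (J - I) with y = 2 / (eta N (N - 1)); since J - I has eigenvalues N - 1 (once)
   and -1 (N - 1 times), its trace norm is 2 (N - 1) y. *)

Definition mxsum (R : nmodType) m n (A : 'M[R]_(m, n)) : R := \sum_i \sum_j A i j.

Section EntrySum.
Variable R : pzRingType.

Lemma mxsum0 m n : mxsum (0 : 'M[R]_(m, n)) = 0.
Proof. by rewrite /mxsum big1 // => i _; rewrite big1 // => j _; rewrite mxE. Qed.

Lemma mxsumD m n (A B : 'M[R]_(m, n)) : mxsum (A + B) = mxsum A + mxsum B.
Proof.
rewrite /mxsum -big_split; apply: eq_bigr => i _.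
by rewrite -big_split; apply: eq_bigr => j _; rewrite mxE.
Qed.

Lemma mxsumZ m n a (A : 'M[R]_(m, n)) : mxsum (a *: A) = a * mxsum A.
Proof.
rewrite /mxsum mulr_sumr; apply: eq_bigr => i _.
by rewrite mulr_sumr; apply: eq_bigr => j _; rewrite mxE.
Qed.

Lemma mxsum_scalar n (a : R) : mxsum (a%:M : 'M[R]_n) = a *+ n.
Proof.
rewrite /mxsum -[in RHS](card_ord n) -sumr_const; apply: eq_bigr => i _.
rewrite (bigD1 i) //= big1 ?addr0 => [|j ji]; first by rewrite mxE eqxx.
by rewrite mxE eq_sym (negbTE ji).
Qed.

Lemma mxsum_block m1 m2 n1 n2 (Aul : 'M[R]_(m1, n1)) (Aur : 'M_(m1, n2))
    (Adl : 'M_(m2, n1)) (Adr : 'M_(m2, n2)) :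
  mxsum (block_mx Aul Aur Adl Adr) = mxsum Aul + mxsum Aur + mxsum Adl + mxsum Adr.
Proof.
rewrite /mxsum big_split_ord /=.
under eq_bigr => i _ do rewrite big_split_ord /=.
under [X in _ + X]eq_bigr => i _ do rewrite big_split_ord /=.
rewrite !big_split /= !addrA.
by congr (_ + _ + _ + _); apply: eq_bigr => i _; apply: eq_bigr => j _;
  rewrite ?block_mxEul ?block_mxEur ?block_mxEdl ?block_mxEdr.
Qed.

End EntrySum.

Section Castmx.
Variable R : pzRingType.

Lemma castmxD m n (e : m = n) (A B : 'M[R]_m) :
  castmx (e, e) (A + B) = castmx (e, e) A + castmx (e, e) B.
Proof. by case: n / e; rewrite !castmx_id. Qed.

Lemma castmx0 m n (e : m = n) : castmx (e, e) (0 : 'M[R]_m) = 0.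
Proof. by case: n / e; rewrite castmx_id. Qed.

Lemma castmx_scalar m n (e : m = n) (a : R) : castmx (e, e) (a%:M : 'M[R]_m) = a%:M.
Proof. by case: n / e; rewrite castmx_id. Qed.

Lemma mxsum_castmx m n (e : m = n) (A : 'M[R]_m) : mxsum (castmx (e, e) A) = mxsum A.
Proof. by case: n / e; rewrite castmx_id. Qed.

Lemma mxtrace_castmx m n (e : m = n) (A : 'M[R]_m) : \tr (castmx (e, e) A) = \tr A.
Proof. by case: n / e; rewrite castmx_id. Qed.

End Castmx.

Section PermInvariantMatrix.
Variables (F : numFieldType) (n : nat) (A : 'M[F]_n).
Hypothesis A_perm_invariant : forall (t : 'S_n) i j, A (t i) (t j) = A i j.

Lemma perm_invariant_diag i i' : A i i = A i' i'.
Proof. by rewrite -(A_perm_invariant (tperm i i')) tpermL. Qed.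

Lemma perm_invariant_offdiag i j i' j' : i != j -> i' != j' -> A i j = A i' j'.
Proof.
move=> ij i'j'; set t := tperm i i'.
have tj_i' : t j != i' by rewrite -[i'](tpermL i i') (inj_eq perm_inj) eq_sym.
rewrite -(A_perm_invariant (t * tperm (t j) j')) !permM !tpermL.
by rewrite tpermD // eq_sym.
Qed.

Lemma perm_invariant_mxE : (1 < n)%N ->
  let b := (mxsum A - \tr A) / (n%:R * (n%:R - 1)) in
  A = (\tr A / n%:R - b) *: 1%:M + b *: const_mx 1.
Proof.
move=> n_gt1 b.
have n0 : (n%:R : F) != 0 by rewrite pnatr_eq0 -lt0n ltnW.
pose i0 : 'I_n := Ordinal (ltnW n_gt1); pose i1 : 'I_n := Ordinal n_gt1.
have i01 : i0 != i1 by [].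
have trA : \tr A = A i0 i0 *+ n.
  rewrite -[X in _ *+ X]card_ord -sumr_const.
  by apply: eq_bigr => i _; apply: perm_invariant_diag.
have row_sum i : \sum_j A i j = A i0 i0 + A i0 i1 *+ n.-1.
  rewrite (bigD1 i) //= (perm_invariant_diag i i0); congr (_ + _).
  have -> : n.-1 = #|predC1 i| by rewrite cardC1 card_ord.
  rewrite -sumr_const.
  by apply: eq_bigr => j ji; apply: perm_invariant_offdiag; rewrite // eq_sym.
have sumA : mxsum A = \tr A + A i0 i1 *+ (n * n.-1).
  rewrite /mxsum; under eq_bigr => i _ do rewrite row_sum.
  by rewrite big_split /= !sumr_const card_ord -trA -mulrnA mulnC.
have -> : b = A i0 i1.
  rewrite /b; have -> : (n%:R - 1 : F) = n.-1%:R by rewrite -subn1 natrB // ltnW.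
  rewrite sumA addrC addKr -[_ *+ (n * _)]mulr_natr natrM mulfK //.
  by rewrite mulf_neq0 // pnatr_eq0 -lt0n -ltnS prednK // ltnW.
have -> : \tr A / n%:R = A i0 i0 by rewrite trA -[_ *+ n]mulr_natr mulfK.
apply/matrixP => i j; rewrite !mxE.
case: eqVneq => [<-|ij] /=.
  by rewrite (perm_invariant_diag i i0); ring.
by rewrite (perm_invariant_offdiag ij i01); ring.
Qed.

End PermInvariantMatrix.

Section Adjoint.
Variable C : numClosedFieldType.

Lemma adj_perm_mx N (s : 'S_N) : adj (perm_mx s : 'M[C]_N) = (perm_mx s)^T.
Proof. by apply/matrixP => i j; rewrite !mxE rmorph_nat. Qed.

Lemma mxsum_adj m n (A : 'M[C]_(m, n)) : mxsum (adj A) = Num.conj (mxsum A).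
Proof.
rewrite /mxsum exchange_big rmorph_sum; apply: eq_bigr => i _.
by rewrite rmorph_sum; apply: eq_bigr => j _; rewrite !mxE.
Qed.

Lemma mxsum_mul_adj m n (A B : 'M[C]_(m, n)) :
  mxsum (A *m adj B) = \sum_l (\sum_i A i l) * Num.conj (\sum_j B j l).
Proof.
rewrite /mxsum; under eq_bigr => i _ do under eq_bigr => j _ do rewrite mxE.
under eq_bigr => i _ do rewrite exchange_big /=.
rewrite exchange_big /=; apply: eq_bigr => l _.
rewrite mulr_suml; apply: eq_bigr => i _.
by rewrite rmorph_sum mulr_sumr; apply: eq_bigr => j _; rewrite !mxE.
Qed.

End Adjoint.

Section Twirl.
Variable C : numClosedFieldType.

Lemma permconjE N (s : 'S_N) (A : 'M[C]_N) :
  permconj s A = \matrix_(i, j) A (s i) (s j).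
Proof.
rewrite /permconj adj_perm_mx tr_perm_mx -row_permE -col_permE.
by apply/matrixP => i j; rewrite !mxE.
Qed.

Lemma permconj_scalar N (s : 'S_N) (a : C) : permconj s a%:M = a%:M.
Proof. by rewrite permconjE; apply/matrixP => i j; rewrite !mxE (inj_eq perm_inj). Qed.

Lemma mxtrace_permconj N (s : 'S_N) (A : 'M[C]_N) : \tr (permconj s A) = \tr A.
Proof.
rewrite permconjE /mxtrace [RHS](reindex_inj (@perm_inj _ s)).
by apply: eq_bigr => i _; rewrite mxE.
Qed.

Lemma mxsum_permconj N (s : 'S_N) (A : 'M[C]_N) : mxsum (permconj s A) = mxsum A.
Proof.
rewrite permconjE /mxsum [RHS](reindex_inj (@perm_inj _ s)); apply: eq_bigr => i _.
by rewrite [RHS](reindex_inj (@perm_inj _ s)); apply: eq_bigr => j _; rewrite mxE.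
Qed.

Lemma twirl_perm_invariant N (A : 'M[C]_N) (t : 'S_N) i j :
  twirl A (t i) (t j) = twirl A i j.
Proof.
rewrite !mxE !summxE; congr (_ * _).
rewrite [RHS](reindex_inj (mulgI t)); apply: eq_bigr => s _.
by rewrite !permconjE !mxE !permM.
Qed.

Lemma twirl_average N (f : 'M[C]_N -> C) (A : 'M[C]_N) :
  {morph f : B B' / B + B'} -> f 0 = 0 -> (forall c B, f (c *: B) = c * f B) ->
  (forall s, f (permconj s A) = f A) -> f (twirl A) = f A.
Proof.
move=> fD f0 fZ fA; rewrite fZ (big_morph f fD f0).
under eq_bigr => s _ do rewrite fA.
by rewrite sumr_const card_Sn -[f A *+ _]mulr_natl mulKf // pnatr_eq0 -lt0n fact_gt0.
Qed.

Lemma twirlE N (A : 'M[C]_N) : (1 < N)%N ->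
  let b := (mxsum A - \tr A) / (N%:R * (N%:R - 1)) in
  twirl A = (\tr A / N%:R - b) *: 1%:M + b *: const_mx 1.
Proof.
move=> N_gt1 b.
have trT : \tr (twirl A) = \tr A.
  apply: twirl_average => [B B'||c B|s];
    by rewrite ?mxtraceD ?mxtrace0 ?mxtraceZ ?mxtrace_permconj.
have sumT : mxsum (twirl A) = mxsum A.
  apply: twirl_average => [B B'||c B|s];
    by rewrite ?mxsumD ?mxsum0 ?mxsumZ ?mxsum_permconj.
rewrite /b -trT -sumT; exact: perm_invariant_mxE (twirl_perm_invariant A) N_gt1.
Qed.

End Twirl.

Lemma bits_inj d r c : (r < 2 ^ d)%N -> (c < 2 ^ d)%N ->
  (forall e, (e < d)%N -> r %/ 2 ^ e %% 2 = c %/ 2 ^ e %% 2)%N -> r = c.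
Proof.
elim: d r c => [|d IH] r c; first by rewrite !ltnS !leqn0 => /eqP-> /eqP->.
move=> r_lt c_lt same_bits.
have bit0 := same_bits 0%N (ltn0Sn _); rewrite expn0 !divn1 in bit0.
have half : (r %/ 2 = c %/ 2)%N.
  apply: IH; rewrite ?ltn_divLR // -?expnSr // => e e_lt.
  by rewrite -!divnMA -expnS; apply: same_bits.
by rewrite (divn_eq r 2) (divn_eq c 2) half bit0.
Qed.

Lemma qbit_inj d (r c : 'I_(2 ^ d)) : (forall j, qbit r j = qbit c j) -> r = c.
Proof.
move=> same_qbits; apply/val_inj/(bits_inj (ltn_ord r) (ltn_ord c)) => e e_lt.
have j_lt : (d.-1 - e < d)%N by lia.
have /(congr1 val) := same_qbits (Ordinal j_lt); rewrite /= !inordK ?ltn_mod //.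
by have -> : (d.-1 - (d.-1 - e) = e)%N by lia.
Qed.

Section PauliTwirl.
Variable C : numClosedFieldType.

Lemma pauliXZE a b (x y : 'I_2) :
  pauliXZ C a b x y = (if a then x != y else x == y)%:R * (if b then (-1) ^+ y else 1).
Proof.
rewrite /pauliXZ; case: a; case: b; rewrite mxE !big_ord_recl !big_ord0 !mxE /=;
  case: x => [[|[|//]] ?]; case: y => [[|[|//]] ?] /=; ring.
Qed.

Lemma sum_pauliXZ_conj (x x' y y' : 'I_2) :
  \sum_(p : bool * bool) pauliXZ C p.1 p.2 x x' * Num.conj (pauliXZ C p.1 p.2 y y')
  = 2 * ((x == y) && (x' == y'))%:R.
Proof.
rewrite -(pair_bigA _ (fun a b => pauliXZ C a b x x' * Num.conj (pauliXZ C a b y y'))) /=.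
rewrite !big_bool /= !pauliXZE !rmorphM !rmorph_nat !rmorphXn rmorphN1.
by case: x => [[|[|//]] ?]; case: y => [[|[|//]] ?];
  case: x' => [[|[|//]] ?]; case: y' => [[|[|//]] ?] /=; ring.
Qed.

Lemma sum_Uk_conj d (r r' c c' : 'I_(2 ^ d)) :
  \sum_(k : key d) Uk C k r r' * Num.conj (Uk C k c c')
  = (2 ^ d)%:R * ((r == c) && (r' == c'))%:R.
Proof.
under eq_bigr => k _ do rewrite !mxE rmorph_prod -big_split /=.
rewrite -(bigA_distr_bigA (fun j (p : bool * bool) =>
   pauliXZ C p.1 p.2 (qbit r j) (qbit r' j) *
   Num.conj (pauliXZ C p.1 p.2 (qbit c j) (qbit c' j)))) /=.
under eq_bigr => j _ do rewrite sum_pauliXZ_conj.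
case: (boolP ((r == c) && (r' == c'))) => [/andP[/eqP <- /eqP <-]|neq].
  under eq_bigr => j _ do rewrite !eqxx mulr1.
  by rewrite prodr_const card_ord natrX mulr1.
have [j /negbTE qbits_neq] : exists j, ~~ ((qbit r j == qbit c j) && (qbit r' j == qbit c' j)).
  apply/existsP; apply: contraR neq => /existsPn same.
  by apply/andP; split; apply/eqP/qbit_inj => j; have /negbNE/andP[/eqP ? /eqP ?] := same j.
by rewrite mulr0 (bigD1 j) //= qbits_neq mulr0 mul0r.
Qed.

Lemma sum_conjU d (M : 'M[C]_(2 ^ d)) :
  \sum_(k : key d) conjU k M = ((2 ^ d)%:R * \tr M) *: 1%:M.
Proof.
apply/matrixP => r c; rewrite summxE.
transitivity (\sum_(k : key d) \sum_r' \sum_c'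
                M r' c' * (Uk C k r r' * Num.conj (Uk C k c c'))).
  apply: eq_bigr => k _; rewrite mxE; under eq_bigr => c' _ do rewrite mxE mulr_suml.
  rewrite exchange_big; apply: eq_bigr => r' _; apply: eq_bigr => c' _.
  by rewrite !mxE mulrCA mulrA.
rewrite exchange_big; under eq_bigr => r' _ do rewrite exchange_big.
under eq_bigr => r' _ do under eq_bigr => c' _ do rewrite -mulr_sumr sum_Uk_conj.
rewrite !mxE; case: eqVneq => [_|_] /=.
  rewrite mulr1 /mxtrace mulr_sumr; apply: eq_bigr => r' _.
  rewrite (bigD1 r') //= eqxx mulr1 big1 ?addr0 => [|c' c'r]; first by rewrite mulrC.
  by rewrite eq_sym (negbTE c'r) !mulr0.
rewrite !mulr0; apply: big1 => r' _; apply: big1 => c' _; exact: mulr0.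
Qed.

End PauliTwirl.

Lemma big_seq_two_valued (R : nmodType) (T : eqType) (s : seq T) (a x : T) (f : T -> R) :
  (forall z, z \in s -> z != x -> z = a) ->
  \sum_(z <- s) f z = f x *+ count_mem x s + f a *+ (size s - count_mem x s).
Proof.
move=> two_valued; rewrite (bigID (pred1 x)) /=.
rewrite -(count_predC (pred1 x) s) addKn -!iter_addr_0 -!big_const_seq.
congr (_ + _); first by apply: eq_bigr => z /eqP->.
rewrite big_seq_cond [RHS]big_seq_cond; apply: eq_bigr => z /andP[zs zx].
by rewrite (two_valued z zs zx).
Qed.

Section Spectrum.
Variable C : numClosedFieldType.
Implicit Types (n : nat) (a b : C).

Lemma char_poly_eigs n (A : 'M[C]_n) : char_poly A = \prod_(z <- eigs A) ('X - z%:P).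
Proof.
rewrite /eigs; case: closed_field_poly_normal => s /= ->.
by rewrite (monicP (char_poly_monic A)) scale1r.
Qed.

Lemma size_eigs n (A : 'M[C]_n) : size (eigs A) = n.
Proof. by apply: succn_inj; rewrite -(size_char_poly A) char_poly_eigs size_prod_XsubC. Qed.

Lemma sum_eigs n (A : 'M[C]_n) : (0 < n)%N -> \sum_(z <- eigs A) z = \tr A.
Proof.
move=> n_gt0; apply: oppr_inj; rewrite -(char_poly_trace A n_gt0).
by rewrite -{3}(size_eigs A) char_poly_eigs coefPn_prod_XsubC // size_eigs -lt0n.
Qed.

Notation aIbJ n a b := (a *: 1%:M + b *: const_mx 1 : 'M[C]_n).

Lemma mxtrace_aIbJ n a b : \tr (aIbJ n a b) = (a + b) *+ n.
Proof.
rewrite /mxtrace -[X in _ *+ X]card_ord -sumr_const.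
by apply: eq_bigr => i _; rewrite !mxE eqxx mulr1n !mulr1.
Qed.

Lemma adj_aIbJ n a b : adj (aIbJ n a b) = aIbJ n (Num.conj a) (Num.conj b).
Proof.
apply/matrixP => i j; rewrite !mxE rmorphD !rmorphM rmorph_nat rmorph1.
by rewrite eq_sym.
Qed.

Lemma mul_aIbJ n a b a' b' :
  aIbJ n a b *m aIbJ n a' b' = aIbJ n (a * a') (a * b' + b * a' + b * b' *+ n).
Proof.
rewrite mulmxDl !mulmxDr -!scalemxAl -!scalemxAr !mul1mx !mulmx1.
have -> : (const_mx 1 : 'M[C]_n) *m (const_mx 1 : 'M[C]_n) = n%:R *: const_mx 1.
  apply/matrixP => i j; rewrite !mxE.
  by under eq_bigr => k _ do rewrite !mxE mulr1; rewrite sumr_const card_ord mulr1.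
by apply/matrixP => i j; rewrite !mxE; ring.
Qed.

Lemma eigs_aIbJ n a b z :
  z \in eigs (aIbJ n a b) -> z != a + b *+ n -> z = a.
Proof.
rewrite -root_prod_XsubC -char_poly_eigs -eigenvalue_root_char.
move=> /eigenvalueP[v eig_v v_neq0] z_neq.
have eig_entries j : z * v 0 j = a * v 0 j + b * \sum_i v 0 i.
  rewrite mulmxDr -!scalemxAr mulmx1 in eig_v.
  have /(congr1 (fun B : 'rV_n => B 0 j)) := eig_v; rewrite /= !mxE => <-.
  by congr (_ + _ * _); apply: eq_bigr => i _; rewrite mxE mulr1.
have sum_v0 : \sum_i v 0 i = 0.
  apply: contra_neq_eq z_neq => sum_neq0; apply: (mulIf sum_neq0).
  rewrite mulr_sumr (eq_bigr _ (fun j _ => eig_entries j)) big_split /= -mulr_sumr.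
  by rewrite sumr_const card_ord mulrDl mulrnAl.
have [j vj_neq0] : exists j, v 0 j != 0.
  apply/existsP; apply: contraNT v_neq0 => /existsPn v0.
  by apply/eqP/rowP => j; rewrite mxE; apply/eqP/negbNE.
by apply: (mulIf vj_neq0); rewrite eig_entries sum_v0 mulr0 addr0.
Qed.

(* The eigenvalue a + b n has multiplicity one: this is forced by the trace. *)
Lemma big_eigs_aIbJ n a b (f : C -> C) : (0 < n)%N -> b *+ n != 0 ->
  \sum_(z <- eigs (aIbJ n a b)) f z = f (a + b *+ n) + f a *+ n.-1.
Proof.
move=> n_gt0 bn_neq0; set c := count_mem (a + b *+ n) (eigs (aIbJ n a b)).
have two_valued := @eigs_aIbJ n a b.
suff c1 : c = 1%N by rewrite (big_seq_two_valued f two_valued) -/c c1 size_eigs subn1.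
have := sum_eigs (aIbJ n a b) n_gt0.
rewrite (big_seq_two_valued id two_valued) -/c size_eigs mxtrace_aIbJ /=.
rewrite mulrnDl addrAC -mulrnDr subnKC ?mulrnDl; last first.
  by rewrite -(size_eigs (aIbJ n a b)) count_size.
by move/addrI; rewrite -[X in _ = X]mulr1n => /(mulrIn bn_neq0).
Qed.

Lemma trnorm0 n : trnorm (0 : 'M[C]_n) = 0.
Proof.
rewrite /trnorm mulmx0 big_seq big1 // => z.
have -> : (0 : 'M[C]_n) = aIbJ n 0 0 by rewrite !scale0r addr0.
have [->|z_neq] := eqVneq z (0 + 0 *+ n); first by rewrite mul0rn addr0 sqrtC0.
by move=> /eigs_aIbJ/(_ z_neq)->; rewrite sqrtC0.
Qed.

Lemma tdistxx n (A : 'M[C]_n) : tdist A A = 0.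
Proof. by rewrite /tdist subrr trnorm0 mulr0. Qed.

Lemma trnorm_aIbJ_opp n (y : C) : (2 < n)%N -> 0 < y ->
  trnorm (aIbJ n (- y) y) = (y *+ 2) *+ n.-1.
Proof.
move=> n_gt2 y_gt0; have y_real : y \is Num.real := gtr0_real y_gt0.
rewrite /trnorm adj_aIbJ conj_Creal ?realN // conj_Creal // mul_aIbJ.
have -> : - y * - y = y ^+ 2 by rewrite mulrNN.
have -> : - y * y + y * - y + y * y *+ n = y ^+ 2 *+ (n - 2).
  by rewrite (mulrnBr _ (ltnW n_gt2)); ring.
rewrite big_eigs_aIbJ; last 2 first.
- exact: ltnW (ltnW n_gt2).
- rewrite -mulrnA mulrn_eq0 expf_eq0 (gt_eqF y_gt0) andbF orbF.
  by rewrite muln_eq0 negb_or -!lt0n subn_gt0; lia.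
rewrite sqrCK ?ltW //.
have -> : y ^+ 2 + y ^+ 2 *+ (n - 2) *+ n = (y *+ n.-1) ^+ 2.
  have [m ->] : exists m, n = m.+3 by exists (n - 3)%N; lia.
  rewrite !subSS subn0 /=; ring.
by rewrite sqrCK ?mulrn_wge0 ?ltW // -mulrnDl -mulr2n.
Qed.

End Spectrum.

Section Construction.
Variable C : numClosedFieldType.

Lemma mxtrace_blk d (A B D E : 'M[C]_(2 ^ d)) : \tr (blk A B D E) = \tr A + \tr E.
Proof. by rewrite mxtrace_castmx mxtrace_block. Qed.

Lemma mxsum_blk d (A B D E : 'M[C]_(2 ^ d)) :
  mxsum (blk A B D E) = mxsum A + mxsum B + mxsum D + mxsum E.
Proof. by rewrite mxsum_castmx mxsum_block. Qed.

Lemma Ma0D d (A B : 'M[C]_(2 ^ d)) : Ma0 (A + B) = Ma0 A + Ma0 B.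
Proof. by rewrite /Ma0 /blk -castmxD add_block_mx !scalerDr addr0. Qed.

Lemma Ma00 d : Ma0 (0 : 'M[C]_(2 ^ d)) = 0.
Proof. by rewrite /Ma0 /blk scaler0 block_mx0 castmx0. Qed.

Lemma Ma0_scalar d (a : C) : Ma0 (a%:M : 'M[C]_(2 ^ d)) = (2^-1 * a)%:M.
Proof. by rewrite /Ma0 /blk !scale_scalar_mx -scalar_mx_block castmx_scalar. Qed.

Lemma Vmx_col_sum d1 d2 (l : 'I_(2 ^ d2)) : (d2 <= d1)%N ->
  \sum_i Vmx C d1 d2 i l = 1.
Proof.
move=> d21; have l_lt : (l * 2 ^ (d1 - d2) < 2 ^ d1)%N.
  by rewrite -{2}(subnKC d21) expnD ltn_pmul2r ?expn_gt0.
rewrite (bigD1 (Ordinal l_lt)) //= mxE eqxx big1 ?addr0 // => i i_neq.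
by rewrite mxE; case: eqP => // i_eq; case/eqP: i_neq; apply: val_inj.
Qed.

Lemma mxsum_Vmx_adj d1 d2 : (d2 <= d1)%N ->
  mxsum (Vmx C d1 d2 *m adj (Vmx C d1 d2)) = (2 ^ d2)%:R.
Proof.
move=> d21; rewrite mxsum_mul_adj.
under eq_bigr => l _ do rewrite Vmx_col_sum // rmorph1 mulr1.
by rewrite sumr_const card_ord.
Qed.

Lemma exp4_inv_mul_exp2 d : ((2 ^ (2 * d))%:R : C)^-1 * (2 ^ d)%:R = ((2 ^ d)%:R)^-1.
Proof.
have pow2_neq0 : ((2 ^ d)%:R : C) != 0 by rewrite pnatr_eq0 expn_eq0.
by rewrite mulnC expnM natrX expr2 invfM -mulrA mulVf ?mulr1.
Qed.

Lemma EMoE d (Mo : 'M[C]_(2 ^ d)) : \tr Mo = 1 -> EMo Mo = ((2 ^ d)%:R)^-1 *: 1%:M.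
Proof. by move=> trMo; rewrite /EMo sum_conjU trMo mulr1 scalerA exp4_inv_mul_exp2. Qed.

Lemma EMcE d1 d2 (Mc : 'M[C]_(2 ^ d2)) : \tr Mc = 1 ->
  EMc d1 Mc = ((2 ^ d2)%:R)^-1 *: (Vmx C d1 d2 *m adj (Vmx C d1 d2)).
Proof.
move=> trMc; rewrite /EMc /Mcpp -mulmx_suml -mulmx_sumr sum_conjU trMc mulr1.
by rewrite -scalemxAr mulmx1 -scalemxAl scalerA exp4_inv_mul_exp2.
Qed.

Lemma EMf0E d (Mo : 'M[C]_(2 ^ d)) : \tr Mo = 1 ->
  EMf0 Mo = ((2 ^ d.+1)%:R)^-1 *: 1%:M.
Proof.
move=> trMo; have pow2_neq0 : ((2 ^ d)%:R : C) != 0 by rewrite pnatr_eq0 expn_eq0.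
have fact_neq0 : ((2 ^ d.+1)`!%:R : C) != 0 by rewrite pnatr_eq0 -lt0n fact_gt0.
have sum_keys s : \sum_(k : key d) permconj s (Ma0 (conjU k Mo)) = (2^-1 * (2 ^ d)%:R)%:M.
  rewrite /permconj -mulmx_suml -mulmx_sumr -(big_morph _ (@Ma0D d) (Ma00 d)).
  by rewrite sum_conjU trMo mulr1 scalemx1 Ma0_scalar -/(permconj s _) permconj_scalar.
rewrite /EMf0; under eq_bigr => s _ do rewrite sum_keys.
rewrite sumr_const card_Sn -scaler_nat scalerA -scalemx1 scalerA; congr (_ *: _).
rewrite natrM mulnC expnM natrX expr2 [in RHS]expnS natrM.
by field; rewrite pow2_neq0 fact_neq0.
Qed.

Section AveragedAnamorphicState.
Variables (d1 d2 eta : nat) (Mo : 'M[C]_(2 ^ d1)) (Mc : 'M[C]_(2 ^ d2)).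
Hypotheses (d1_gt0 : (0 < d1)%N) (d21 : (d2 <= d1)%N) (eta_gt0 : (0 < eta)%N).
Hypotheses (trMo : \tr Mo = 1) (trMc : \tr Mc = 1).
Notation N := (2 ^ d1.+1)%N.

Let pow2_neq0 : ((2 ^ d1)%:R : C) != 0. Proof. by rewrite pnatr_eq0 expn_eq0. Qed.
Let eta_neq0 : (eta%:R : C) != 0. Proof. by rewrite pnatr_eq0 -lt0n. Qed.
Let N_gt2 : (2 < N)%N.
Proof.
have : (2 <= 2 ^ d1)%N by rewrite -{1}(expn1 2) leq_exp2l.
by rewrite expnS; lia.
Qed.
Let N_neq0 : (N%:R : C) != 0. Proof. by rewrite pnatr_eq0 -lt0n ltnW // ltnW. Qed.
Let N1_neq0 : (N%:R - 1 : C) != 0.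
Proof. by rewrite subr_eq0 pnatr_eq1 gtn_eqF // ltnW. Qed.

Lemma mxtrace_Mbar1 : \tr (Mbar1 eta Mo Mc) = 1.
Proof. by rewrite mxtrace_blk mxtraceZ EMoE // mxtraceZ mxtrace1; field. Qed.

Lemma mxsum_Mbar1 : mxsum (Mbar1 eta Mo Mc) = 1 + 2 / eta%:R.
Proof.
have sumEMc : mxsum (EMc d1 Mc) = 1.
  by rewrite EMcE // mxsumZ mxsum_Vmx_adj // mulVf // pnatr_eq0 expn_eq0.
rewrite /Mbar1 /Ma1 EMoE //; move: (EMc d1 Mc) sumEMc => E sumE.
rewrite mxsum_blk !mxsumZ mxsum_adj sumE rmorph1 mxsum_scalar.
by field; rewrite eta_neq0 pow2_neq0.
Qed.

Lemma twirl_Mbar1 :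
  twirl (Mbar1 eta Mo Mc)
  = ((N%:R - 1 - 2 / eta%:R) / (N%:R * (N%:R - 1))) *: (1%:M : 'M[C]_N)
    + ((2 / eta%:R) / (N%:R * (N%:R - 1))) *: const_mx 1.
Proof.
rewrite twirlE ?mxtrace_Mbar1 ?mxsum_Mbar1 1?ltnW //.
by congr (_ *: _ + _ *: _); field; rewrite eta_neq0 N_neq0 N1_neq0.
Qed.

Lemma tdist_twirl_Mbar1_EMf0 :
  tdist (twirl (Mbar1 eta Mo Mc)) (EMf0 Mo) = (eta%:R * (2 ^ d1)%:R)^-1.
Proof.
rewrite /tdist twirl_Mbar1 // EMf0E //.
set y := (2 / eta%:R) / (N%:R * (N%:R - 1)).
have y_gt0 : 0 < y.
  by rewrite !divr_gt0 ?ltr0n ?expn_gt0 // mulr_gt0 ?subr_gt0 ?ltr0n ?ltr1n ?expn_gt0 // ltnW.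
have -> : ((N%:R - 1 - 2 / eta%:R) / (N%:R * (N%:R - 1))) *: (1%:M : 'M[C]_N)
    + y *: const_mx 1 - (N%:R)^-1 *: 1%:M = (- y) *: 1%:M + y *: const_mx 1.
  by apply/matrixP => i j; rewrite !mxE /y; field; rewrite eta_neq0 N_neq0 N1_neq0.
rewrite trnorm_aIbJ_opp // -mulrnA -[y *+ _]mulr_natr natrM.
rewrite -subn1 natrB ?(ltnW (ltnW N_gt2)) //.
have := N1_neq0; rewrite /y expnS natrM => N1_neq0'.
by field; rewrite pow2_neq0 eta_neq0 N1_neq0'.
Qed.

End AveragedAnamorphicState.
End Construction.

Theorem theorem13 (C : numClosedFieldType) (d1 d2 eta : nat) (eps : C)
  (Mo : 'M[C]_(2 ^ d1)) (Mc : 'M[C]_(2 ^ d2)) :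
  (1 <= d2)%N -> (d2 <= d1)%N ->
  density Mo -> posdef Mo -> density Mc ->
  (0 < eta)%N -> 0 < eps -> (eta%:R)^-1 < eps ->
  (forall (k : key d1) (k' : key d2),
     ((eta%:R)^-2 : C) *
       opnorm (Mcpp d1 k' Mc *m invmx (conjU k Mo) *m Mcpp d1 k' Mc)
     <= 4^-1 * lambda_min (conjU k Mo)) ->
  let N := (2 ^ d1.+1)%N in
  [/\ (* (i) *)
      EMf0 Mo = (N%:R)^-1 *: (1%:M : 'M[C]_N),
      (* (ii) *)
      [/\ EMo Mo = ((2 ^ d1)%:R)^-1 *: 1%:M,
          EMc d1 Mc = ((2 ^ d2)%:R)^-1 *: (Vmx C d1 d2 *m adj (Vmx C d1 d2)) &
          twirl (Mbar1 eta Mo Mc)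
          = ((N%:R - 1 - 2 / eta%:R) / (N%:R * (N%:R - 1))) *: (1%:M : 'M[C]_N)
            + ((2 / eta%:R) / (N%:R * (N%:R - 1))) *: const_mx 1],
      (* (iii) *)
      tdist (twirl (Mbar1 eta Mo Mc)) (EMf0 Mo) = (eta%:R * (2 ^ d1)%:R)^-1
      /\ (eta%:R * (2 ^ d1)%:R)^-1 < eps &
      (* (iv) *)
      forall (Mo2 : 'M[C]_(2 ^ d1)) (Mc2 : 'M[C]_(2 ^ d2)),
        density Mo2 -> posdef Mo2 -> density Mc2 ->
        tdist (twirl (Mbar1 eta Mo Mc)) (twirl (Mbar1 eta Mo2 Mc2)) = 0].
Proof.
move=> d2_gt0 d21 [_ _ trMo] _ [_ _ trMc] eta_gt0 _ eta_inv_lt_eps _ N.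
have d1_gt0 : (0 < d1)%N := leq_trans d2_gt0 d21.
split.
- exact: EMf0E.
- split; [exact: EMoE | exact: EMcE | exact: twirl_Mbar1].
- split; first exact: tdist_twirl_Mbar1_EMf0.
  apply: le_lt_trans eta_inv_lt_eps.
  rewrite invfM ler_piMr // ?invr_ge0 ?ler0n // invf_le1 ?ltr0n ?expn_gt0 //.
  by rewrite ler1n expn_gt0.
- move=> Mo2 Mc2 [_ _ trMo2] _ [_ _ trMc2].
  by rewrite !twirl_Mbar1 // tdistxx.
Qed.
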